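(* Let $X$ be a topological space which is the disjoint union $X=A_1\sqcup A_2$ of two open subsets $A_1,A_2$, and let $e_1\in A_1$, $e_2\in A_2$. Then the free Graev topological group $F_G(X,e_1)$ is isomorphic, as a topological group, to the free Markov topological group $F_M(A_1\vee A_2)$ on the wedge sum $A_1\vee A_2=X/\{e_1,e_2\}$ (the quotient space of $X$ identifying $e_1$ and $e_2$).
   Context: The free Markov topological group on a space $Y$ is the topological group $F_M(Y)$ with a continuous map $\sigma:Y\to F_M(Y)$ such that every continuous map $f:Y\to G$ into a topological group induces a unique continuous homomorphism $\hat f:F_M(Y)\to G$ with $\hat f\sigma=f$; algebraically it is the free group on the set $Y$. The free Graev topological group $F_G(X,\ast)$ on a based space is the topological group with a continuous map $\sigma_\ast:X\to F_G(X,\ast)$, $\sigma_\ast(\ast)=e$, such that every continuous map $f:X\to G$ into a topological group with $f(\ast)=e$ induces a unique continuous homomorphism $\tilde f$ with $\tilde f\sigma_\ast=f$. No separation axioms are assumed. *)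

Set Implicit Arguments.
Unset Strict Implicit.

(* A topology on a type T: a family of open subsets closed under finite
   intersections and arbitrary unions (the empty set is the empty union). *)
Record topology (T : Type) := Topology {
  open : (T -> Prop) -> Prop;
  open_full : open (fun _ => True);
  open_inter : forall U V, open U -> open V -> open (fun x => U x /\ V x);
  open_union : forall (I : Type) (F : I -> T -> Prop),
      (forall i, open (F i)) -> open (fun x => exists i, F i x)
}.

Definition continuous (T1 T2 : Type) (t1 : topology T1) (t2 : topology T2)
  (f : T1 -> T2) : Prop :=
  forall U, open t2 U -> open t1 (fun x => U (f x)).

Definition prod_open (T1 T2 : Type) (t1 : topology T1) (t2 : topology T2)
  (U : T1 * T2 -> Prop) : Prop :=
  forall p, U p -> exists V1 V2, open t1 V1 /\ open t2 V2 /\ V1 (fst p) /\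
    V2 (snd p) /\ forall a b, V1 a -> V2 b -> U (a, b).

Record TopGroup := {
  tg_carrier :> Type;
  tg_mul : tg_carrier -> tg_carrier -> tg_carrier;
  tg_inv : tg_carrier -> tg_carrier;
  tg_one : tg_carrier;
  tg_assoc : forall x y z, tg_mul x (tg_mul y z) = tg_mul (tg_mul x y) z;
  tg_mul1 : forall x, tg_mul tg_one x = x;
  tg_mulV : forall x, tg_mul (tg_inv x) x = tg_one;
  tg_top : topology tg_carrier;
  tg_mul_cont : forall U, open tg_top U ->
      prod_open tg_top tg_top (fun p => U (tg_mul (fst p) (snd p)));
  tg_inv_cont : continuous tg_top tg_top tg_inv
}.

Arguments tg_mul {t} _ _.
Arguments tg_inv {t} _.
Arguments tg_one {t}.
Arguments tg_top t : clear implicits.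

Definition group_hom (G H : TopGroup) (f : G -> H) : Prop :=
  forall x y, f (@tg_mul G x y) = @tg_mul H (f x) (f y).

Definition cont_hom (G H : TopGroup) (f : G -> H) : Prop :=
  group_hom f /\ continuous (tg_top G) (tg_top H) f.

Definition is_free_markov (Y : Type) (tY : topology Y) (F : TopGroup)
  (sigma : Y -> F) : Prop :=
  continuous tY (tg_top F) sigma /\
  forall (G : TopGroup) (f : Y -> G), continuous tY (tg_top G) f ->
    exists h : F -> G,
      (cont_hom h /\ forall y, h (sigma y) = f y) /\
      forall h' : F -> G, cont_hom h' -> (forall y, h' (sigma y) = f y) ->
        forall z, h' z = h z.

Definition is_free_graev (X : Type) (tX : topology X) (pt : X) (F : TopGroup)
  (sigma : X -> F) : Prop :=
  continuous tX (tg_top F) sigma /\ sigma pt = @tg_one F /\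
  forall (G : TopGroup) (f : X -> G), continuous tX (tg_top G) f ->
    f pt = @tg_one G ->
    exists h : F -> G,
      (cont_hom h /\ forall x, h (sigma x) = f x) /\
      forall h' : F -> G, cont_hom h' -> (forall x, h' (sigma x) = f x) ->
        forall z, h' z = h z.

Definition is_quotient_identifying (X : Type) (tX : topology X) (a b : X)
  (W : Type) (tW : topology W) (q : X -> W) : Prop :=
  (forall w, exists x, q x = w) /\
  (forall x y, q x = q y <-> (x = y \/ (x = a /\ y = b) \/ (x = b /\ y = a))) /\
  (forall U : W -> Prop, open tW U <-> open tX (fun x => U (q x))).

Definition top_group_iso (G H : TopGroup) : Prop :=
  exists (phi : G -> H) (psi : H -> G),
    group_hom phi /\ continuous (tg_top G) (tg_top H) phi /\
    continuous (tg_top H) (tg_top G) psi /\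
    (forall x, psi (phi x) = x) /\ (forall y, phi (psi y) = y).

(* Write s_M for the generators of F_M(W) and c := s_M(e1).  The map
   x ↦ s_M(x) c⁻¹ on A1, x ↦ s_M(x) on A2, sends e1 to 1 and is continuous
   because A1, A2 is an open partition; by the Graev property it induces
   phi : F_G(X, e1) → F_M(W).  Conversely x ↦ s_G(x) s_G(e2) on A1,
   x ↦ s_G(x) on A2, takes the same value s_G(e2) at e1 and e2, so it descends
   to a continuous map on the quotient W; by the Markov property it induces
   psi : F_M(W) → F_G(X, e1).  Both composites fix the generators, hence are
   identities by the uniqueness half of the universal properties. *)
From Stdlib Require Import ClassicalEpsilon FunctionalExtensionality
  PropExtensionality Classical.

Set Implicit Arguments.
Unset Strict Implicit.

Lemma pred_ext (T : Type) (P Q : T -> Prop) : (forall x, P x <-> Q x) -> P = Q.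
Proof.
  intro H; apply functional_extensionality; intro x.
  apply propositional_extensionality; auto.
Qed.

(* A set is open as soon as each of its points has an open neighbourhood
   inside it: it is the union of all its open subsets. *)
Lemma open_local (T : Type) (t : topology T) (S : T -> Prop) :
  (forall x, S x -> exists O, open t O /\ O x /\ forall y, O y -> S y) ->
  open t S.
Proof.
  intro H.
  set (I := {O : T -> Prop | open t O /\ forall y, O y -> S y}).
  assert (E : S = fun x => exists i : I, proj1_sig i x).
  { apply pred_ext; intro x; split.
    - intro Sx; destruct (H x Sx) as [O [HO [Ox HS]]].
      exists (exist _ O (conj HO HS)); exact Ox.
    - intros [i Oi]; exact (proj2 (proj2_sig i) x Oi). }
  assert (HU : open t (fun x => exists i : I, proj1_sig i x))
    by (apply open_union; intro i; exact (proj1 (proj2_sig i))).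
  exact (eq_ind_r (open t) HU E).
Qed.

Lemma cont_comp (T1 T2 T3 : Type) (t1 : topology T1) (t2 : topology T2)
  (t3 : topology T3) (f : T1 -> T2) (g : T2 -> T3) :
  continuous t1 t2 f -> continuous t2 t3 g -> continuous t1 t3 (fun x => g (f x)).
Proof. intros Hf Hg U HU; exact (Hf _ (Hg _ HU)). Qed.

Lemma cont_id (T : Type) (t : topology T) : continuous t t (fun x : T => x).
Proof. intros U HU; exact HU. Qed.

Lemma cont_const (T1 T2 : Type) (t1 : topology T1) (t2 : topology T2) (c : T2) :
  continuous t1 t2 (fun _ : T1 => c).
Proof.
  intros U _; destruct (classic (U c)) as [Hc | Hc].
  - replace (fun _ : T1 => U c) with (fun _ : T1 => True)
      by (apply pred_ext; tauto).
    apply open_full.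
  - apply open_local; intros x Hx; contradiction.
Qed.

Lemma cont_mul (T : Type) (t : topology T) (G : TopGroup) (u v : T -> G) :
  continuous t (tg_top G) u -> continuous t (tg_top G) v ->
  continuous t (tg_top G) (fun x => tg_mul (u x) (v x)).
Proof.
  intros Hu Hv U HU; apply open_local; intros x Hx.
  destruct (@tg_mul_cont G U HU (u x, v x) Hx)
    as [V1 [V2 [HV1 [HV2 [Vu [Vv Hbox]]]]]].
  exists (fun y => V1 (u y) /\ V2 (v y)); repeat split; auto.
  - apply open_inter; [apply Hu | apply Hv]; assumption.
  - intros y [Hy1 Hy2]; exact (Hbox _ _ Hy1 Hy2).
Qed.

Lemma cont_glue (T1 T2 : Type) (t1 : topology T1) (t2 : topology T2)
  (A1 A2 : T1 -> Prop) (f f1 f2 : T1 -> T2) :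
  open t1 A1 -> open t1 A2 -> (forall x, A1 x \/ A2 x) ->
  continuous t1 t2 f1 -> continuous t1 t2 f2 ->
  (forall x, A1 x -> f x = f1 x) -> (forall x, A2 x -> f x = f2 x) ->
  continuous t1 t2 f.
Proof.
  intros hA1 hA2 hcover H1 H2 E1 E2 U HU; apply open_local; intros x Hx.
  destruct (hcover x) as [Ax | Ax].
  - exists (fun y => A1 y /\ U (f1 y)); repeat split; auto.
    + apply open_inter; auto.
    + rewrite <- E1; auto.
    + intros y [Ay Uy]; rewrite E1; auto.
  - exists (fun y => A2 y /\ U (f2 y)); repeat split; auto.
    + apply open_inter; auto.
    + rewrite <- E2; auto.
    + intros y [Ay Uy]; rewrite E2; auto.
Qed.

Section GroupFacts.
Variable G : TopGroup.

Lemma mulV_r (x : G) : tg_mul x (tg_inv x) = tg_one.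
Proof.
  rewrite <- (tg_mul1 (tg_mul x (tg_inv x))).
  rewrite <- (tg_mulV (tg_inv x)) at 1.
  rewrite <- tg_assoc, (tg_assoc (tg_inv x) x (tg_inv x)), tg_mulV, tg_mul1.
  apply tg_mulV.
Qed.

Lemma mul1_r (x : G) : tg_mul x tg_one = x.
Proof. rewrite <- (tg_mulV x), tg_assoc, mulV_r, tg_mul1; reflexivity. Qed.

Lemma inv_uniq (y x : G) : tg_mul y x = tg_one -> y = tg_inv x.
Proof.
  intro H; rewrite <- (mul1_r y), <- (mulV_r x), tg_assoc, H, tg_mul1.
  reflexivity.
Qed.

Lemma mulK_inv (a b : G) : tg_mul (tg_mul a b) (tg_inv b) = a.
Proof. rewrite <- tg_assoc, mulV_r, mul1_r; reflexivity. Qed.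

Lemma mul_invK (a b : G) : tg_mul (tg_mul a (tg_inv b)) b = a.
Proof. rewrite <- tg_assoc, tg_mulV, mul1_r; reflexivity. Qed.
End GroupFacts.

Lemma hom_one (G H : TopGroup) (h : G -> H) : group_hom h -> h tg_one = tg_one.
Proof.
  intro hh.
  assert (E : tg_mul (h tg_one) (h tg_one) = h tg_one)
    by (rewrite <- hh, tg_mul1; reflexivity).
  rewrite <- (mulK_inv (h tg_one) (h tg_one)) at 1; rewrite E; apply mulV_r.
Qed.

Lemma hom_inv (G H : TopGroup) (h : G -> H) (a : G) : group_hom h ->
  h (tg_inv a) = tg_inv (h a).
Proof.
  intro hh; apply inv_uniq; rewrite <- hh, tg_mulV; apply hom_one; exact hh.
Qed.

Lemma cont_hom_id (G : TopGroup) : cont_hom (fun z : G => z).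
Proof. split; [intros a b; reflexivity | apply cont_id]. Qed.

Lemma cont_hom_comp (G H K : TopGroup) (f : G -> H) (g : H -> K) :
  cont_hom f -> cont_hom g -> cont_hom (fun z => g (f z)).
Proof.
  intros [hf cf] [hg cg]; split.
  - intros a b; rewrite hf, hg; reflexivity.
  - exact (cont_comp cf cg).
Qed.

Definition twist (X : Type) (G : TopGroup) (A : X -> Prop) (u : X -> G) (c : G)
  (x : X) : G :=
  if excluded_middle_informative (A x) then tg_mul (u x) c else u x.

Lemma twist_in (X : Type) (G : TopGroup) (A : X -> Prop) (u : X -> G) (c : G)
  (x : X) : A x -> twist A u c x = tg_mul (u x) c.
Proof. unfold twist; destruct (excluded_middle_informative (A x)); tauto. Qed.

Lemma twist_out (X : Type) (G : TopGroup) (A : X -> Prop) (u : X -> G) (c : G)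
  (x : X) : ~ A x -> twist A u c x = u x.
Proof. unfold twist; destruct (excluded_middle_informative (A x)); tauto. Qed.

Lemma twist_cont (X : Type) (tX : topology X) (A B : X -> Prop) (G : TopGroup)
  (u : X -> G) (c : G) :
  open tX A -> open tX B -> (forall x, A x \/ B x) ->
  (forall x, A x -> B x -> False) ->
  continuous tX (tg_top G) u -> continuous tX (tg_top G) (twist A u c).
Proof.
  intros hA hB hcover hdisj hu.
  apply (cont_glue hA hB hcover (cont_mul hu (cont_const tX c)) hu).
  - intros x; apply twist_in.
  - intros x Bx; apply twist_out; intro Ax; exact (hdisj x Ax Bx).
Qed.

Lemma quotient_lift (X W T : Type) (tX : topology X) (tW : topology W)
  (tT : topology T) (q : X -> W) (f : X -> T) :
  (forall w, exists x, q x = w) ->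
  (forall U : W -> Prop, open tX (fun x => U (q x)) -> open tW U) ->
  (forall x y, q x = q y -> f x = f y) -> continuous tX tT f ->
  exists g : W -> T, continuous tW tT g /\ forall x, g (q x) = f x.
Proof.
  intros hsurj hopen hfib hf.
  set (r := fun w => proj1_sig (constructive_indefinite_description _ (hsurj w))).
  assert (rq : forall w, q (r w) = w)
    by (intro w; exact (proj2_sig (constructive_indefinite_description _ (hsurj w)))).
  assert (gq : forall x, f (r (q x)) = f x) by (intro x; apply hfib, rq).
  exists (fun w => f (r w)); split; [| exact gq].
  intros U HU; apply hopen.
  replace (fun x => U (f (r (q x)))) with (fun x => U (f x))
    by (apply pred_ext; intro x; rewrite gq; tauto).
  exact (hf _ HU).
Qed.

Lemma graev_endo_id (X : Type) (tX : topology X) (pt : X) (F : TopGroup)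
  (s : X -> F) (h : F -> F) :
  is_free_graev tX pt s -> cont_hom h -> (forall x, h (s x) = s x) ->
  forall z, h z = z.
Proof.
  intros [sc [s1 univ]] hh hs z.
  destruct (univ F s sc s1) as [h0 [_ uniq]].
  rewrite (uniq h hh hs z); symmetry; exact (uniq _ (cont_hom_id F) (fun _ => eq_refl) z).
Qed.

Lemma markov_endo_id (Y : Type) (tY : topology Y) (F : TopGroup) (s : Y -> F)
  (h : F -> F) :
  is_free_markov tY s -> cont_hom h -> (forall y, h (s y) = s y) ->
  forall z, h z = z.
Proof.
  intros [sc univ] hh hs z.
  destruct (univ F s sc) as [h0 [_ uniq]].
  rewrite (uniq h hh hs z); symmetry; exact (uniq _ (cont_hom_id F) (fun _ => eq_refl) z).
Qed.

Lemma iso_of_inverse_on_generators (X : Type) (tX : topology X) (pt : X)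
  (FG : TopGroup) (sG : X -> FG) (Y : Type) (tY : topology Y) (FM : TopGroup)
  (sM : Y -> FM) (phi : FG -> FM) (psi : FM -> FG) :
  is_free_graev tX pt sG -> is_free_markov tY sM -> cont_hom phi -> cont_hom psi ->
  (forall x, psi (phi (sG x)) = sG x) -> (forall y, phi (psi (sM y)) = sM y) ->
  top_group_iso FG FM.
Proof.
  intros hFG hFM hphi hpsi hG hM.
  exists phi, psi; repeat split.
  - exact (proj1 hphi).
  - exact (proj2 hphi).
  - exact (proj2 hpsi).
  - exact (graev_endo_id hFG (cont_hom_comp hphi hpsi) hG).
  - exact (markov_endo_id hFM (cont_hom_comp hpsi hphi) hM).
Qed.

Section Wedge.
Variables (X : Type) (tX : topology X) (A1 A2 : X -> Prop).
Hypotheses (hA1 : open tX A1) (hA2 : open tX A2)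
  (hcover : forall x, A1 x \/ A2 x) (hdisj : forall x, A1 x -> A2 x -> False).
Variables (e1 e2 : X) (W : Type) (tW : topology W) (q : X -> W).
Hypotheses (he1 : A1 e1) (he2 : A2 e2)
  (hW : is_quotient_identifying tX e1 e2 tW q).
Variables (FG : TopGroup) (sG : X -> FG) (FM : TopGroup) (sM : W -> FM).
Hypotheses (hFG : is_free_graev tX e1 sG) (hFM : is_free_markov tW sM).

(* The generating maps of phi (on X) and of psi (on X, before descending). *)
Definition fwd_gen : X -> FM := twist A1 (fun x => sM (q x)) (tg_inv (sM (q e1))).
Definition bwd_gen : X -> FG := twist A1 sG (sG e2).

Lemma not_A1_e2 : ~ A1 e2.
Proof. intro H; exact (hdisj H he2). Qed.

Lemma q_continuous : continuous tX tW q.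
Proof. intros U HU; exact (proj1 (proj2 (proj2 hW) U) HU). Qed.

Lemma q_e2 : q e2 = q e1.
Proof. apply (proj2 (proj1 (proj2 hW) e2 e1)); auto. Qed.

Lemma graev_to_markov :
  exists phi : FG -> FM, cont_hom phi /\ forall x, phi (sG x) = fwd_gen x.
Proof.
  destruct hFG as [_ [_ univ]]; destruct hFM as [sMc _].
  destruct (univ FM fwd_gen) as [phi [[hphi Hphi] _]].
  - exact (twist_cont _ hA1 hA2 hcover hdisj (cont_comp q_continuous sMc)).
  - unfold fwd_gen; rewrite twist_in by exact he1; apply mulV_r.
  - exists phi; auto.
Qed.

(* bwd_gen takes the value s_G(e2) at both e1 and e2, so it descends to W. *)
Lemma markov_to_graev :
  exists psi : FM -> FG, cont_hom psi /\ forall x, psi (sM (q x)) = bwd_gen x.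
Proof.
  destruct hW as [hsurj [hfib hopen]]; destruct hFG as [sGc [sG1 _]].
  destruct hFM as [_ univ].
  assert (hsame : bwd_gen e1 = bwd_gen e2).
  { unfold bwd_gen; rewrite twist_in, twist_out, sG1, tg_mul1 by
      (exact he1 || exact not_A1_e2); reflexivity. }
  destruct (@quotient_lift _ _ _ _ tW (tg_top FG) q bwd_gen hsurj
              (fun U => proj2 (hopen U))) as [g [gc gq]].
  - intros x y Hq; apply hfib in Hq.
    destruct Hq as [-> | [[-> ->] | [-> ->]]]; auto.
  - exact (twist_cont _ hA1 hA2 hcover hdisj sGc).
  - destruct (univ FG g gc) as [psi [[hpsi Hpsi] _]].
    exists psi; split; [exact hpsi | intro x; rewrite Hpsi; apply gq].
Qed.

Lemma roundtrip_graev (phi : FG -> FM) (psi : FM -> FG) :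
  cont_hom psi -> (forall x, phi (sG x) = fwd_gen x) ->
  (forall x, psi (sM (q x)) = bwd_gen x) -> forall x, psi (phi (sG x)) = sG x.
Proof.
  intros [hpsi _] Hphi Hpsi x; rewrite Hphi; unfold fwd_gen.
  destruct (classic (A1 x)) as [Ax | Ax].
  - rewrite twist_in, hpsi, hom_inv, !Hpsi by assumption; unfold bwd_gen.
    rewrite !twist_in, (proj1 (proj2 hFG)), tg_mul1 by assumption.
    apply mulK_inv.
  - rewrite twist_out, Hpsi by assumption; unfold bwd_gen.
    rewrite twist_out by assumption; reflexivity.
Qed.

Lemma roundtrip_markov (phi : FG -> FM) (psi : FM -> FG) :
  cont_hom phi -> (forall x, phi (sG x) = fwd_gen x) ->
  (forall x, psi (sM (q x)) = bwd_gen x) -> forall w, phi (psi (sM w)) = sM w.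
Proof.
  intros [hphi _] Hphi Hpsi w.
  destruct (proj1 hW w) as [x <-]; rewrite Hpsi; unfold bwd_gen.
  destruct (classic (A1 x)) as [Ax | Ax].
  - rewrite twist_in, hphi, !Hphi by assumption; unfold fwd_gen.
    rewrite twist_in, (twist_out _ _ not_A1_e2), q_e2 by assumption.
    apply mul_invK.
  - rewrite twist_out, Hphi by assumption; unfold fwd_gen.
    rewrite twist_out by assumption; reflexivity.
Qed.
End Wedge.

Theorem lemma2 (X : Type) (tX : topology X) (A1 A2 : X -> Prop)
  (hA1 : open tX A1) (hA2 : open tX A2)
  (hcover : forall x, A1 x \/ A2 x) (hdisj : forall x, A1 x -> A2 x -> False)
  (e1 e2 : X) (he1 : A1 e1) (he2 : A2 e2)
  (W : Type) (tW : topology W) (q : X -> W)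
  (hW : is_quotient_identifying tX e1 e2 tW q)
  (FG : TopGroup) (sG : X -> FG) (hFG : is_free_graev tX e1 sG)
  (FM : TopGroup) (sM : W -> FM) (hFM : is_free_markov tW sM) :
  top_group_iso FG FM.
Proof.
  destruct (graev_to_markov hA1 hA2 hcover hdisj he1 hW hFG hFM)
    as [phi [hphi Hphi]].
  destruct (markov_to_graev hA1 hA2 hcover hdisj he1 he2 hW hFG hFM)
    as [psi [hpsi Hpsi]].
  apply (iso_of_inverse_on_generators hFG hFM hphi hpsi).
  - exact (roundtrip_graev he1 hFG hpsi Hphi Hpsi).
  - exact (roundtrip_markov hdisj he2 hW hphi Hphi Hpsi).
Qed.
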